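(* Let $X_1,\ldots,X_n$ be non-empty sets, $\Omega=X_1\times\cdots\times X_n$, and let $F\subset\Omega$ be a full set. If $F$ has finitely many related components, say $F=\bigcup_{i=1}^k R_i$ with $R_1,\ldots,R_k$ the distinct related components of $F$, then $k=1$.
   Context: For $1\le i\le n$, $\Pi_i:\Omega\to X_i$ denotes the canonical projection. A subset $S\subset\Omega$ is good if every complex-valued function $f$ on $S$ can be written as $f(x_1,\ldots,x_n)=u_1(x_1)+\cdots+u_n(x_n)$ for all $(x_1,\ldots,x_n)\in S$, for suitable complex-valued functions $u_i$ on $X_i$. A subset $S\subset\Omega$ is full if $S$ is a maximal good subset of $\Pi_1S\times\cdots\times\Pi_nS$ (i.e. $S$ is good and no good subset of $\Pi_1S\times\cdots\times\Pi_nS$ strictly contains $S$). For a good set $S$, two points $x,y\in S$ are related if there is a finite full subset of $S$ containing both $x$ and $y$; this is an equivalence relation on $S$, and its equivalence classes are the related components of $S$. *)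

From mathcomp Require Import all_boot all_algebra.
From mathcomp Require Import complex.
From mathcomp Require Import Rstruct.
From Stdlib Require Import List.
Set Implicit Arguments.
Unset Strict Implicit.
Unset Printing Implicit Defensive.
Local Open Scope ring_scope.

Definition CC := complex Rdefinitions.R.

Definition Omega (n : nat) (X : 'I_n -> Type) := forall i : 'I_n, X i.

Definition subset_of {T : Type} (A B : T -> Prop) := forall x, A x -> B x.

Definition proj_set (n : nat) (X : 'I_n -> Type) (S : Omega X -> Prop) (i : 'I_n)
  : X i -> Prop := fun a => exists x, S x /\ x i = a.

Definition box (n : nat) (X : 'I_n -> Type) (S : Omega X -> Prop) : Omega X -> Prop :=
  fun x => forall i, @proj_set n X S i (x i).

(* S is good: every complex function on S is a sum of functions of one
   coordinate (a function on S is represented by any function on Omega,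
   only its values on S matter). *)
Definition good (n : nat) (X : 'I_n -> Type) (S : Omega X -> Prop) : Prop :=
  forall f : Omega X -> CC,
    exists u : forall i : 'I_n, X i -> CC,
      forall x, S x -> f x = \sum_(i < n) u i (x i).

Definition full (n : nat) (X : 'I_n -> Type) (S : Omega X -> Prop) : Prop :=
  good S /\ subset_of S (box S) /\
  forall T : Omega X -> Prop,
    good T -> subset_of S T -> subset_of T (box S) -> subset_of T S.

Definition finite_set {T : Type} (A : T -> Prop) : Prop :=
  exists l : list T, forall x, A x -> In x l.

Definition related (n : nat) (X : 'I_n -> Type) (S : Omega X -> Prop)
  (x y : Omega X) : Prop :=
  exists T : Omega X -> Prop,
    subset_of T S /\ finite_set T /\ full T /\ T x /\ T y.

Definition related_component (n : nat) (X : 'I_n -> Type)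
  (S : Omega X -> Prop) (R : Omega X -> Prop) : Prop :=
  exists x, S x /\ R = (fun y => S y /\ related S x y).

From mathcomp Require Import all_boot all_algebra.
From mathcomp Require Import complex Rstruct ring.
From Stdlib Require Import List Classical ClassicalEpsilon.
From Stdlib Require Import FunctionalExtensionality PropExtensionality.
Set Implicit Arguments.
Unset Strict Implicit.
Unset Printing Implicit Defensive.
Import GRing.Theory.
Local Open Scope ring_scope.

(* The separable closure of [S] consists of the points at which every
   additively separable function [sum_i w_i(x_i)] vanishing on [S] vanishes.
   A good set is full iff its box lies in its closure, and a good subset of a
   finite [U] whose box lies in the closure of [U] extends greedily to a finite
   full subset of [U].
   Pick a center [c_j] in each related component and build a finite [U] in [F]
   from full witnesses of [c_m ~ y], [c_j ~ c_j], and, for each coordinate [i]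
   and each pair of components meeting in an [i]-th fibre, of such a meeting.
   If [w] annihilates [U], each [w_i] is constant on every witness, hence
   takes the same value at the [i]-th coordinates of two centers whose
   components meet in an [i]-th fibre; by fullness of [F] this value is then
   the same for all centers.  So the box of [U] lies in its closure, [c_j] and [y]
   lie in a finite full subset of [F], and all of [F] is one component. *)

Lemma finite_set0 (T : Type) : finite_set (fun _ : T => False).
Proof. by exists nil. Qed.

Lemma finite_setU (T : Type) (A B : T -> Prop) :
  finite_set A -> finite_set B -> finite_set (fun z => A z \/ B z).
Proof.
by move=> [l1 h1] [l2 h2]; exists (l1 ++ l2) => z [/h1|/h2] h; apply: in_or_app; auto.
Qed.

Lemma finite_set_sub (T : Type) (A B : T -> Prop) :
  finite_set B -> subset_of A B -> finite_set A.
Proof. by move=> [l hl] hAB; exists l => z /hAB /hl. Qed.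

Section SeparableClosure.

Variables (n : nat) (X : 'I_n -> Type).

Definition sepf (w : forall i, X i -> CC) (x : Omega X) : CC := \sum_(i < n) w i (x i).

Definition annihilates (w : forall i, X i -> CC) (S : Omega X -> Prop) :=
  forall x, S x -> sepf w x = 0.

Definition sep_closure (S : Omega X -> Prop) (q : Omega X) :=
  forall w, annihilates w S -> sepf w q = 0.

Lemma sep_closure_mono (S T : Omega X -> Prop) :
  subset_of S T -> subset_of (sep_closure S) (sep_closure T).
Proof. by move=> hST q hq w hw; apply: hq => x /hST; apply: hw. Qed.

Lemma box_mono (S T : Omega X -> Prop) : subset_of S T -> subset_of (box S) (box T).
Proof. by move=> hST p hp i; have [x [/hST hx <-]] := hp i; exists x. Qed.

Lemma good_sub (S T : Omega X -> Prop) : good S -> subset_of T S -> good T.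
Proof. by move=> hS hTS f; have [u hu] := hS f; exists u => x /hTS; apply: hu. Qed.

Lemma good_add (T : Omega X -> Prop) q :
  good T -> ~ sep_closure T q -> good (fun z => T z \/ z = q).
Proof.
move=> hT /not_all_ex_not [w hnw] f.
have [hw /eqP hwq] := imply_to_and _ _ hnw.
have [u hu] := hT f.
pose a := (f q - sepf u q) / sepf w q.
exists (fun i x => u i x + a * w i x) => x hx.
rewrite big_split /= -mulr_sumr -/(sepf u x) -/(sepf w x).
case: hx => [hx | ->]; first by rewrite hw // mulr0 addr0 hu.
by rewrite /a divfK // addrC subrK.
Qed.

Lemma good_not_closure (S T : Omega X -> Prop) z :
  good S -> subset_of T S -> S z -> ~ T z -> ~ sep_closure T z.
Proof.
move=> hS hTS hz hTz hcl.
pose f x : CC := if excluded_middle_informative (x = z) then 1 else 0.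
have [u hu] := hS f.
have hfz : sepf u z = 1.
  by rewrite /sepf -hu // /f; case: excluded_middle_informative.
have hTu : annihilates u T.
  move=> x hx; rewrite /sepf -hu; last exact: hTS.
  by rewrite /f; case: excluded_middle_informative => // exz; case: hTz; rewrite -exz.
by move/eqP: (hcl u hTu); rewrite hfz oner_eq0.
Qed.

Lemma full_box_closure (F : Omega X -> Prop) :
  full F -> subset_of (box F) (sep_closure F).
Proof.
move=> [hg [hFbox hmax]] p hp; apply: NNPP => hnp.
have hFp : F p.
  apply: (hmax _ (good_add hg hnp)); first by move=> z hz; left.
    by move=> z [/hFbox | ->].
  by right.
by apply: hnp => w; apply.
Qed.

Lemma full_of_box_closure (T : Omega X -> Prop) :
  good T -> subset_of (box T) (sep_closure T) -> full T.
Proof.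
move=> hg hcl; split=> //; split; first by move=> z hz i; exists z.
move=> S hS hTS hSbox z hz; apply: NNPP => hTz.
exact: good_not_closure hS hTS hz hTz (hcl _ (hSbox _ hz)).
Qed.

Lemma good_basis_extension (U T0 : Omega X -> Prop) (l : list (Omega X)) :
  good T0 -> subset_of T0 U ->
  exists T, [/\ good T, subset_of T0 T, subset_of T U &
    forall q, In q l -> U q -> sep_closure T q].
Proof.
elim: l T0 => [|q l IHl] T0 hT0 hT0U; first by exists T0; split.
have [T1 [hT1 hT01 hT1U hq]] : exists T1, [/\ good T1, subset_of T0 T1,
    subset_of T1 U & U q -> sep_closure T1 q].
  case: (classic (U q /\ ~ sep_closure T0 q)) => [[hUq hncl] | hcl]; last first.
    by exists T0; split=> // hUq; apply: NNPP => hncl; apply: hcl.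
  exists (fun z => T0 z \/ z = q); split; first exact: good_add.
  - by move=> z; left.
  - by move=> z [/hT0U | ->].
  by move=> _ w hw; apply: hw; right.
have [T [hT hT1T hTU hl]] := IHl T1 hT1 hT1U.
exists T; split=> //; first by move=> z /hT01 /hT1T.
move=> q' [<- | /hl //] /hq; exact: sep_closure_mono.
Qed.

Lemma full_finite_extension (U T0 : Omega X -> Prop) :
  finite_set U -> subset_of (box U) (sep_closure U) ->
  good T0 -> subset_of T0 U ->
  exists T, [/\ subset_of T0 T, subset_of T U, finite_set T & full T].
Proof.
move=> [l hl] hUcl hT0 hT0U.
have [T [hT hT0T hTU hcl]] := good_basis_extension l hT0 hT0U.
exists T; split=> //; first by apply: finite_set_sub hTU; exists l.
apply: full_of_box_closure => // p /(box_mono hTU) /hUcl hp w hw.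
by apply: hp => x hx; apply: (hcl x (hl x hx) hx).
Qed.

Definition coord_update (x z : Omega X) (i : 'I_n) : Omega X :=
  fun i' => if i' == i then z i' else x i'.

Lemma sepf_coord_update w (x z : Omega X) i :
  sepf w (coord_update x z i) = sepf w x + (w i (z i) - w i (x i)).
Proof.
rewrite /sepf (bigD1 i) //= [in RHS](bigD1 i) //= /coord_update eqxx.
rewrite (eq_bigr (fun i' => w i' (x i'))); last by move=> i' /negbTE ->.
ring.
Qed.

Lemma full_annihilator_const (T : Omega X -> Prop) w a z i :
  full T -> annihilates w T -> T a -> T z -> w i (z i) = w i (a i).
Proof.
move=> hT hw ha hz.
have hbox : box T (coord_update a z i).
  by move=> i'; rewrite /coord_update; case: (i' == i); [exists z | exists a].
move: (full_box_closure hT hbox hw).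
by rewrite sepf_coord_update hw // add0r => /eqP; rewrite subr_eq0 => /eqP.
Qed.

Lemma related_mono (S S' : Omega X -> Prop) x y :
  subset_of S S' -> related S x y -> related S' x y.
Proof.
move=> hSS' [T [hTS rest]]; exists T; split=> // z /hTS; exact: hSS'.
Qed.

Lemma related_refl (S : Omega X -> Prop) x : good S -> S x -> related S x x.
Proof.
move=> hS hx; exists (fun z => z = x); split; first by move=> z ->.
split; first by exists (x :: nil) => z ->; left.
split; last by split.
apply: full_of_box_closure; first by apply: (good_sub hS) => z ->.
move=> p hp w hw; suff -> : p = x by apply: hw.
by apply: functional_extensionality_dep => i; have [x' [-> ->]] := hp i.
Qed.

Lemma related_mem (S : Omega X -> Prop) x y : related S x y -> S x /\ S y.
Proof. by move=> [T [hTS [_ [_ [/hTS hx /hTS hy]]]]]. Qed.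

Lemma annihilator_related_const (S : Omega X -> Prop) w a z i :
  annihilates w S -> related S a z -> w i (z i) = w i (a i).
Proof.
move=> hw [T [hTS [_ [hT [ha hz]]]]].
by apply: full_annihilator_const hT _ ha hz => x /hTS; apply: hw.
Qed.

End SeparableClosure.

Section Components.

Variables (n : nat) (X : 'I_n -> Type) (F : Omega X -> Prop) (k : nat).
Variable c : 'I_k -> Omega X.
Hypotheses (hF : full F) (hFc : forall j, F (c j)).
Hypothesis hcov : forall x, F x -> exists j, related F (c j) x.

Definition linked (S : Omega X -> Prop) i j1 j2 :=
  exists x1 x2, [/\ related S (c j1) x1, related S (c j2) x2 & x1 i = x2 i].

Definition centered (U : Omega X -> Prop) :=
  [/\ subset_of U F, finite_set U & forall z, U z -> exists j, related U (c j) z].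

Lemma related_center_refl j : related F (c j) (c j).
Proof. by apply: related_refl; [case: hF | apply: hFc]. Qed.

(* [w' l a] is the value of [w] at the center of some component meeting the
   [l]-th fibre over [a]; it annihilates [F], so it is constant on [Pi_l F]
   because [F] is full. *)
Lemma center_values_agree w :
  (forall j, sepf w (c j) = 0) ->
  (forall i j1 j2, linked F i j1 j2 -> w i (c j1 i) = w i (c j2 i)) ->
  forall i j1 j2, w i (c j1 i) = w i (c j2 i).
Proof.
move=> hw0 hlink i j1 j2.
pose J l a := epsilon (inhabits j1) (fun m => exists x, related F (c m) x /\ x l = a).
pose w' l a := w l (c (J l a) l).
have hw' l m x : related F (c m) x -> w' l (x l) = w l (c m l).
  move=> hx; apply: hlink.
  have [|x' [hx' e]] := epsilon_spec (inhabits j1)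
    (fun m' => exists x', related F (c m') x' /\ x' l = x l); first by exists m, x.
  by exists x', x.
have hw'F : annihilates w' F.
  move=> x /hcov [m hm]; rewrite -(hw0 m); apply: eq_bigr => i' _; exact: hw'.
rewrite -(hw' i j1 _ (related_center_refl j1)) -(hw' i j2 _ (related_center_refl j2)).
exact: full_annihilator_const hF hw'F (hFc j2) (hFc j1).
Qed.

Lemma sepf_box_center (U : Omega X -> Prop) w p j :
  (forall z, U z -> exists m, related U (c m) z) -> (forall m, U (c m)) ->
  (forall i j1 j2, linked F i j1 j2 -> linked U i j1 j2) ->
  annihilates w U -> box U p -> sepf w p = sepf w (c j).
Proof.
move=> hUc hcU hlink hw hp.
have hagree := center_values_agree (fun m => hw _ (hcU m)).
have {}hagree i j1 j2 : w i (c j1 i) = w i (c j2 i).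
  apply: hagree => {}i {}j1 {}j2 /hlink [x1 [x2 [h1 h2 e]]].
  by rewrite -(annihilator_related_const _ hw h1) e (annihilator_related_const _ hw h2).
apply: eq_bigr => i _; have [z [/hUc [m hm] <-]] := hp i.
by rewrite (annihilator_related_const _ hw hm).
Qed.

Lemma centered0 : centered (fun _ => False).
Proof. by split=> //; exact: finite_set0. Qed.

Lemma centeredU (U V : Omega X -> Prop) :
  centered U -> centered V -> centered (fun z => U z \/ V z).
Proof.
move=> [hUF hUfin hU] [hVF hVfin hV]; split; first by move=> z [/hUF|/hVF].
  exact: finite_setU.
move=> z [/hU | /hV] [j hj]; exists j.
  by apply: related_mono hj => x; left.
by apply: related_mono hj => x; right.
Qed.

Lemma centered_of_related j x :
  related F (c j) x -> exists T, centered T /\ related T (c j) x.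
Proof.
move=> [T [hTF [hTfin [hT [hTc hTx]]]]].
have hrel z : T z -> related T (c j) z.
  by move=> hz; exists T; split=> //; split=> //; split.
by exists T; split; [split=> // z /hrel; exists j | apply: hrel].
Qed.

Lemma centered_forall (A : finType) (P : A -> (Omega X -> Prop) -> Prop) :
  (forall a U V, subset_of U V -> P a U -> P a V) ->
  (forall a, exists U, centered U /\ P a U) ->
  exists U, centered U /\ forall a, P a U.
Proof.
move=> hmono hP.
suff [U [hU hs]] : exists U, centered U /\ forall a, a \in enum A -> P a U.
  by exists U; split=> // a; apply: hs; rewrite mem_enum.
elim: (enum A) => [|a s [U [hU hs]]]; first by exists (fun _ => False); split; [exact: centered0|].
have [V [hV hPa]] := hP a.
exists (fun z => V z \/ U z); split; first exact: centeredU.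
move=> b; rewrite inE => /orP [/eqP -> | /hs].
  by apply: hmono hPa => z; left.
by apply: hmono => z; right.
Qed.

Lemma exists_centered_cover y : F y ->
  exists U, [/\ centered U, U y, forall j, U (c j) &
    forall i j1 j2, linked F i j1 j2 -> linked U i j1 j2].
Proof.
move=> /hcov [m /centered_of_related [Uy [hUy hy]]].
have [_ {}hy] := related_mem hy.
have [Uc [hUc hc]] : exists U, centered U /\ forall j, U (c j).
  apply: (centered_forall (P := fun j U => U (c j))) => [j U V hUV /hUV // | j].
  have [T [hT hjT]] := centered_of_related (related_center_refl j).
  by exists T; split=> //; case: (related_mem hjT).
have [Ul [hUl hl]] : exists U, centered U /\ forall t : 'I_n * 'I_k * 'I_k,
    linked F t.1.1 t.1.2 t.2 -> linked U t.1.1 t.1.2 t.2.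
  apply: centered_forall => [[[i j1] j2] U V hUV hP /hP [x1 [x2 [h1 h2 e]]] | [[i j1] j2]].
    by exists x1, x2; split=> //; apply: related_mono hUV _.
  case: (classic (linked F i j1 j2)) => [[x1 [x2 [h1 h2 e]]] | hnl]; last first.
    by exists (fun _ => False); split; [exact: centered0 | move/hnl].
  have [T1 [hT1 h1']] := centered_of_related h1.
  have [T2 [hT2 h2']] := centered_of_related h2.
  exists (fun z => T1 z \/ T2 z); split; first exact: centeredU.
  move=> _; exists x1, x2; split=> //.
    by apply: related_mono h1' => z; left.
  by apply: related_mono h2' => z; right.
exists (fun z => Uy z \/ (Uc z \/ Ul z)); split.
- by do 2?apply: centeredU.
- by left.
- by move=> j; right; left.
move=> i j1 j2 /(hl (i, j1, j2)) [x1 [x2 [h1 h2 e]]]; exists x1, x2; split=> //.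
  by apply: related_mono h1 => z hz; right; right.
by apply: related_mono h2 => z hz; right; right.
Qed.

Lemma related_to_centers j y : F y -> related F (c j) y.
Proof.
move=> /exists_centered_cover [U [[hUF hUfin hUc] hy hcU hlink]].
have hcl : subset_of (box U) (sep_closure U).
  by move=> p hp w hw; rewrite (sepf_box_center j hUc hcU hlink hw hp); apply: hw.
have hT0 : good (fun z => z = c j \/ z = y).
  by apply: good_sub (hF.1) _ => z [-> | ->]; [apply: hFc | apply: hUF].
have [|T [hT0T hTU hTfin hT]] := full_finite_extension hUfin hcl hT0.
  by move=> z [-> | ->].
exists T; split; first by move=> z /hTU /hUF.
by do 3?split=> //; apply: hT0T; [left | right].
Qed.

End Components.

Theorem theorem1 (n : nat) (X : 'I_n -> Type)
  (hX : forall i : 'I_n, inhabited (X i))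
  (F : Omega X -> Prop) (hF : full F) (hFne : exists x, F x)
  (k : nat) (R : 'I_k -> (Omega X -> Prop))
  (hR : forall j, related_component F (R j))
  (hdist : forall j1 j2, R j1 = R j2 -> j1 = j2)
  (hcov : forall x, F x -> exists j, R j x) :
  k = 1.
Proof.
have [c hc] := choice _ hR.
have hFc j : F (c j) by case: (hc j).
have hcov_rel x : F x -> exists j, related F (c j) x.
  by move=> /hcov [j]; rewrite (hc j).2 => -[_ hx]; exists j.
have hRF j : R j = F.
  apply: functional_extensionality => y; apply: propositional_extensionality.
  rewrite (hc j).2; split=> [[] // | hy]; split=> //.
  exact: (related_to_centers hF hFc hcov_rel j hy).
have [x0 /hcov [j0 _]] := hFne.
have hk0 : (0 < #|'I_k|)%N by apply/card_gt0P; exists j0.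
have hk1 : (#|'I_k| <= 1)%N.
  by apply/card_le1_eqP => j1 j2 _ _; apply: hdist; rewrite !hRF.
by apply/eqP; rewrite eqn_leq -(card_ord k) hk0 hk1.
Qed.
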